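(* Let $q$ be a prime and let $A=A_1\oplus\cdots\oplus A_k$ be a finite abelian $q$-group, where $A_i=\mathbb{Z}_{q^{e_i}}^{n_i}$ with $1\le e_1<\cdots<e_k$ and $n_i>0$ for $1\le i\le k$. For each $1\le i\le k$, choose $\epsilon_i\in A_i\setminus qA_i$ (viewed as an element of $A$ via the inclusion of the $i$-th summand). Let $\mathcal I(e_1,\dots,e_k)$ be the set of all finite sequences of integer pairs $(i_1,f_1),\dots,(i_l,f_l)$ satisfying: (i) $l\ge 0$ (the sequence is empty when $l=0$); (ii) $1\le i_1<\cdots<i_l\le k$; (iii) $0\le f_s\le e_{i_s}-1$ for $1\le s\le l$; (iv) $0<f_{s+1}-f_s<e_{i_{s+1}}-e_{i_s}$ for $1\le s\le l-1$. Then as $(i_1,f_1),\dots,(i_l,f_l)$ runs through $\mathcal I(e_1,\dots,e_k)$, the elements $\sum_{s=1}^l q^{f_s}\epsilon_{i_s}$ form a complete list of representatives of the orbits of $A$ under the natural action of $\mathrm{Aut}(A)$, each orbit being represented exactly once.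
   Context: $\mathbb{Z}_m$ denotes the cyclic group of order $m$. The empty sum is $0$. *)

From HB Require Import structures.
From mathcomp Require Import all_boot all_order all_algebra.
Set Implicit Arguments. Unset Strict Implicit. Unset Printing Implicit Defensive.
Import GRing.Theory.
Local Open Scope ring_scope.

(* The i-th summand A_i = (Z_{q^{e_i}})^{n_i}, as row vectors (indices i : 'I_k,
   i.e. 0-based). *)
Definition summand (q k : nat) (e n : 'I_k -> nat) (i : 'I_k) : Type :=
  'rV['Z_(q ^ e i)]_(n i).

Definition Agrp (q k : nat) (e n : 'I_k -> nat) : Type :=
  {dffun forall i : 'I_k, summand q e n i}.

Definition Aadd (q k : nat) (e n : 'I_k -> nat) (x y : Agrp q e n) : Agrp q e n :=
  @finfun _ (summand q e n) (fun i => x i + y i).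

Definition Azero (q k : nat) (e n : 'I_k -> nat) : Agrp q e n :=
  @finfun _ (summand q e n) (fun i => 0).

Definition Ainj (q k : nat) (e n : 'I_k -> nat) (i : 'I_k) (v : summand q e n i)
  : Agrp q e n :=
  @finfun _ (summand q e n) (dfwith (fun j => (0 : summand q e n j)) v).

(* Automorphisms of A: bijective additive self-maps (additive maps of a finite
   abelian group are exactly the group endomorphisms). *)
Definition is_aut (q k : nat) (e n : 'I_k -> nat) (phi : Agrp q e n -> Agrp q e n) :=
  bijective phi /\ forall x y, phi (Aadd x y) = Aadd (phi x) (phi y).

Definition same_orbit (q k : nat) (e n : 'I_k -> nat) (x y : Agrp q e n) : Prop :=
  exists phi, is_aut phi /\ phi x = y.

Fixpoint chain_ok (k : nat) (e : 'I_k -> nat) (s : seq ('I_k * nat)) : bool :=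
  match s with
  | (i1, f1) :: (((i2, f2) :: _) as t) =>
      [&& (i1 < i2)%N, (f1 < f2)%N, (f2 - f1 < e i2 - e i1)%N & chain_ok e t]
  | _ => true
  end.

Definition in_I (k : nat) (e : 'I_k -> nat) (s : seq ('I_k * nat)) : bool :=
  all (fun p => (p.2 < e p.1)%N) s && chain_ok e s.

Definition rep (q k : nat) (e n : 'I_k -> nat)
  (eps : forall i : 'I_k, summand q e n i) (s : seq ('I_k * nat)) : Agrp q e n :=
  foldr (fun p acc => Aadd (Ainj ((eps p.1) *+ (q ^ p.2)%N)) acc) (Azero q e n) s.

From mathcomp Require Import all_boot all_order all_algebra.
From mathcomp Require Import zify.
Set Implicit Arguments. Unset Strict Implicit. Unset Printing Implicit Defensive.
Import GRing.Theory.
Local Open Scope ring_scope.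

(* Existence: each component x_i of x is 0 or q^h y with y outside q A_i, and
   all vectors outside q A_i form a single Aut(A_i)-orbit; so x lies in the
   orbit of a sum of terms q^(f_s) eps_(i_s) with increasing i_s and
   f_s < e_(i_s). While two adjacent terms violate condition (iv), one of them
   is cancelled by a transvection x |-> x + pi(x_c) of A, where pi : A_c -> A_d
   is a homomorphism mapping the c-term to minus the d-term.
   Uniqueness: the properties "q^h divides q^j x" are Aut(A)-invariant; on a
   representative they are computed termwise, and this profile of (j, h)
   determines the sequence. *)

(* [same_orbit] is [hom_orbit Aadd] up to conversion. *)
Definition hom_orbit (T : Type) (op : T -> T -> T) (x y : T) : Prop :=
  exists phi : T -> T, (bijective phi /\ {morph phi : a b / op a b}) /\ phi x = y.

Section HomOrbit.
Variables (T : Type) (op : T -> T -> T).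

Lemma hom_orbit_refl x : hom_orbit op x x.
Proof. by exists id; split=> //; split=> //; exists id. Qed.

Lemma hom_orbit_sym x y : hom_orbit op x y -> hom_orbit op y x.
Proof.
case=> phi [[[psi phiK psiK] phiM] <-]; exists psi; split=> //.
split=> [|a b]; first by exists phi.
by rewrite -{1}(psiK a) -{1}(psiK b) -phiM phiK.
Qed.

Lemma hom_orbit_trans x y z :
  hom_orbit op x y -> hom_orbit op y z -> hom_orbit op x z.
Proof.
case=> [f [[fB fM] <-]] [g [[gB gM] <-]]; exists (g \o f).
by split=> //; split=> [|a b /=]; [exact: bij_comp | rewrite fM gM].
Qed.

End HomOrbit.

Lemma morph_mulrn (V W : zmodType) (f : V -> W) :
  {morph f : a b / a + b} -> forall v N, f (v *+ N) = f v *+ N.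
Proof.
move=> fD v N; have f0 : f 0 = 0 by apply: (@addrI _ (f 0)); rewrite -fD !addr0.
by elim: N => [|N IH]; rewrite ?mulr0n // !mulrS fD IH.
Qed.

(* A row transvection [v |-> v + lambda(v) (w - u)], with [lambda] the
   coordinate [j] rescaled so that [lambda(u) = 1], sends [u] to [w]. *)
Lemma hom_orbit_unit_coord (R : comUnitRingType) n (u w : 'rV[R]_n) j :
  u 0 j \is a GRing.unit -> w 0 j \is a GRing.unit -> hom_orbit +%R u w.
Proof.
move=> uj wj; pose lam (v : 'rV[R]_n) := v 0 j / u 0 j; pose d := w - u.
have lamD a b : lam (a + b) = lam a + lam b by rewrite /lam mxE mulrDl.
have lamZ c a : lam (c *: a) = c * lam a by rewrite /lam mxE mulrA.
have lamu : lam u = 1 by rewrite /lam mulrV.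
have lamw : lam w \is a GRing.unit by rewrite /lam unitrMl // unitrV.
have lamd : lam d = lam w - 1 by rewrite /d lamD -scaleN1r lamZ lamu mulN1r.
exists (fun v => v + lam v *: d); split; last by rewrite lamu scale1r addrC subrK.
split=> [|a b]; last by rewrite lamD scalerDl addrACA.
exists (fun v => v - (lam v / lam w) *: d) => v.
  rewrite lamD lamZ lamd mulrBr mulr1 addrCA subrr addr0 mulrK //.
  by rewrite addrK.
rewrite lamD -scaleNr lamZ lamd mulNr mulrBr divrK // mulr1 opprB.
by rewrite addrCA subrr addr0 scaleNr subrK.
Qed.

Section ZpRow.
Variable m : nat.
Hypothesis m_gt1 : (1 < m)%N.

Lemma val_ZpD (a b : 'Z_m) :
  nat_of_ord (a + b) = ((nat_of_ord a + nat_of_ord b) %% m)%N.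
Proof. by rewrite -val_Zp_nat // natrD !natr_Zp. Qed.

Lemma val_Zp_mulrn (z : 'Z_m) N : nat_of_ord (z *+ N) = (z * N %% m)%N.
Proof. by rewrite -{1}(natr_Zp z) -mulrnA val_Zp_nat. Qed.

Lemma row_Zp_mulrn_dvd n (v : 'rV['Z_m]_n) N : (m %| N)%N -> v *+ N = 0.
Proof.
case/dvdnP=> t ->; apply/rowP=> j.
by rewrite mulmxnE mxE mulrnA -mulr_natr (pchar_Zp m_gt1) mulr0.
Qed.

End ZpRow.

(* [pi v] is [w *+ C] times the [j]-th coordinate of [v] in units of [u 0 j];
   that coordinate is only known modulo [m1], which is harmless because [m2]
   divides [C * m1]. *)
Lemma row_Zp_hom_to_mulrn (m1 m2 n1 n2 : nat) (u : 'rV['Z_m1]_n1)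
    (w : 'rV['Z_m2]_n2) j C :
  (1 < m1)%N -> (1 < m2)%N -> u 0 j \is a GRing.unit -> (m2 %| C * m1)%N ->
  exists pi : 'rV['Z_m1]_n1 -> 'rV['Z_m2]_n2,
    {morph pi : a b / a + b} /\ pi u = w *+ C.
Proof.
move=> m1_gt1 m2_gt1 uj m2_dvd; pose lam (v : 'rV['Z_m1]_n1) := v 0 j / u 0 j.
exists (fun v => w *+ (C * nat_of_ord (lam v))); split=> [a b|]; last first.
  have val1 : nat_of_ord (1 : 'Z_m1) = 1%N.
    exact: etrans (val_Zp_nat m1_gt1 1) (modn_small m1_gt1).
  by rewrite /lam mulrV // val1 muln1.
rewrite /lam mxE mulrDl val_ZpD // -mulrnDr -mulnDr.
rewrite {2}(divn_eq (_ + _) m1) mulnDr mulrnDr.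
by rewrite [w *+ (C * (_ * m1))](row_Zp_mulrn_dvd m2_gt1) ?add0r // mulnCA dvdn_mull.
Qed.

Definition divisible_by (V : zmodType) (N : nat) (v : V) : Prop :=
  exists w : V, v = w *+ N.

Lemma divisible_byD (V : zmodType) N (u v : V) :
  divisible_by N u -> divisible_by N v -> divisible_by N (u + v).
Proof. by case=> a -> [b ->]; exists (a + b); rewrite mulrnDl. Qed.

Lemma divisible_by_expn (V : zmodType) N x (v : V) :
  (0 < x)%N -> divisible_by (N ^ x) v -> divisible_by N v.
Proof.
by move=> x_gt0 [a ->]; exists (a *+ N ^ x.-1); rewrite -mulrnA -expnSr prednK.
Qed.

Lemma row_Zp_divisible_by m n (v : 'rV['Z_m]_n) d :
  (forall j, dvdn d (v 0 j)) -> divisible_by d v.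
Proof.
move=> dvd_v; exists (\row_j ((v 0 j %/ d)%:R : 'Z_m)); apply/rowP=> j.
by rewrite mulmxnE mxE -mulrnA divnK // natr_Zp.
Qed.

Section ZpPrimePower.
Variables (q e : nat).
Hypotheses (q_pr : prime q) (e_gt0 : (0 < e)%N).
Local Notation Zq := 'Z_(q ^ e).

Lemma qpow_gt1 : (1 < q ^ e)%N.
Proof. by rewrite -(expn0 q) ltn_exp2l ?prime_gt1. Qed.

Lemma Zpq_unitE (z : Zq) : (z \is a GRing.unit) = ~~ (q %| z)%N.
Proof.
by rewrite -{1}(natr_Zp z) unitZpE ?qpow_gt1 // coprime_pexpl // prime_coprime.
Qed.

Lemma Zpq_unitD (z w : Zq) :
  z \is a GRing.unit -> w \isn't a GRing.unit -> z + w \is a GRing.unit.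
Proof.
rewrite !Zpq_unitE negbK val_ZpD ?qpow_gt1 // => q_ndvd_z q_dvd_w.
apply: contra q_ndvd_z => q_dvd_zw; rewrite -(dvdn_addl _ q_dvd_w).
by rewrite (divn_eq (_ + _) (q ^ e)) dvdn_add // dvdn_mull // dvdn_exp.
Qed.

Lemma row_Zpq_unit_coord n (v : 'rV[Zq]_n) :
  ~ divisible_by q v -> exists j, v 0 j \is a GRing.unit.
Proof.
move=> v_ndvd; apply/existsP; apply: contraT; rewrite negb_exists => /forallP nu.
by case: v_ndvd; apply: row_Zp_divisible_by => j; have := nu j; rewrite Zpq_unitE negbK.
Qed.

Lemma row_Zpq_mulrn_eq0 n (v : 'rV[Zq]_n) g :
  (g <= e)%N -> v *+ q ^ g = 0 -> divisible_by (q ^ (e - g)) v.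
Proof.
move=> le_ge vq0; apply: row_Zp_divisible_by => j.
have /eqP := congr1 (fun M : 'rV[Zq]_n => nat_of_ord (M 0 j)) vq0.
rewrite /= mulmxnE mxE val_Zp_mulrn ?qpow_gt1 // -/(dvdn _ _).
by rewrite -{1}(subnK le_ge) expnD dvdn_pmul2r // expn_gt0 prime_gt0.
Qed.

(* Two vectors outside [q Zq^n] with a common unit coordinate are related by
   [hom_orbit_unit_coord]; otherwise [u + w] has unit coordinates in both
   places and serves as an intermediate step. *)
Lemma hom_orbit_undivisible n (u w : 'rV[Zq]_n) :
  ~ divisible_by q u -> ~ divisible_by q w -> hom_orbit +%R u w.
Proof.
move=> /row_Zpq_unit_coord [j uj] /row_Zpq_unit_coord [j' wj'].
have [wj|wNj] := boolP (w 0 j \is a GRing.unit).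
  exact: hom_orbit_unit_coord uj wj.
have [uj'|uNj'] := boolP (u 0 j' \is a GRing.unit).
  exact: hom_orbit_unit_coord uj' wj'.
apply: (@hom_orbit_trans _ _ _ (u + w)).
  by apply: (hom_orbit_unit_coord uj); rewrite mxE Zpq_unitD.
apply: hom_orbit_sym; apply: (hom_orbit_unit_coord wj').
by rewrite mxE addrC Zpq_unitD.
Qed.

Lemma row_Zpq_decomposition n (x : 'rV[Zq]_n) : x != 0 ->
  exists h y, [/\ (h < e)%N, ~ divisible_by q y & x = y *+ q ^ h].
Proof.
move=> x_neq0; pose P h := [exists y, x == y *+ q ^ h].
have P0 : exists h, P h by exists 0%N; apply/existsP; exists x.
have P_lt h : P h -> (h < e)%N.
  case/existsP=> y /eqP x_def; rewrite ltnNge; apply: contra x_neq0 => le_eh.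
  by rewrite x_def (row_Zp_mulrn_dvd qpow_gt1) // dvdn_exp2l.
have [h /existsP [y /eqP x_def] h_max] :=
  ex_maxnP P0 (fun h Ph => ltnW (P_lt h Ph)).
exists h, y; split=> [||//].
  by apply: P_lt; apply/existsP; exists y; rewrite x_def.
case=> z y_def; suff : (h < h)%N by rewrite ltnn.
by apply: h_max; apply/existsP; exists z; rewrite x_def y_def -mulrnA expnS mulnC.
Qed.

End ZpPrimePower.

Section DirectSum.
Variables (q k : nat) (e n : 'I_k -> nat).
Local Notation A := (Agrp q e n).
Local Notation S := (summand q e n).

Lemma AaddE (x y : A) i : Aadd x y i = x i + y i.
Proof. by rewrite ffunE. Qed.

Lemma AzeroE i : Azero q e n i = 0.
Proof. by rewrite ffunE. Qed.

Lemma Ainj_eq i (v : S i) : Ainj v i = v.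
Proof. by rewrite ffunE dfwith_in. Qed.

Lemma Ainj_neq i (v : S i) j : i != j -> Ainj v j = 0.
Proof. by move=> neq_ij; rewrite ffunE dfwith_out. Qed.

Lemma same_orbit_componentwise (x y : A) :
  (forall i, hom_orbit +%R (x i) (y i)) -> same_orbit x y.
Proof.
move=> /fin_all_exists [phi phiP].
have /fin_all_exists [psi psiP] :
    forall i, exists psi_i, cancel (phi i) psi_i /\ cancel psi_i (phi i).
  by move=> i; have [[[psi_i ? ?] _] _] := phiP i; exists psi_i.
exists (fun z : A => @finfun _ S (fun i => phi i (z i))); split; last first.
  by apply/ffunP=> i; rewrite ffunE; case: (phiP i).
split=> [|a b]; last first.
  by apply/ffunP=> i; rewrite !(AaddE, ffunE); case: (phiP i) => [[_ ->]].
by exists (fun z : A => @finfun _ S (fun i => psi i (z i))) => z;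
  apply/ffunP=> i; rewrite !ffunE; case: (psiP i).
Qed.

Lemma Aadd_AinjC b (z : A) (v w : S b) :
  Aadd (Aadd z (Ainj v)) (Ainj w) = Aadd z (Ainj (v + w)).
Proof.
apply/ffunP=> j; rewrite !AaddE; have [<-|neq_bj] := eqVneq b j.
  by rewrite !Ainj_eq addrA.
by rewrite !Ainj_neq // !addr0.
Qed.

Lemma Aadd_Ainj0 b (z : A) : Aadd z (Ainj (0 : S b)) = z.
Proof.
apply/ffunP=> j; rewrite AaddE; have [<-|neq_bj] := eqVneq b j.
  by rewrite Ainj_eq addr0.
by rewrite Ainj_neq // addr0.
Qed.

Lemma same_orbit_transvection a b (pi : S a -> S b) (x : A) :
  a != b -> {morph pi : u v / u + v} -> same_orbit x (Aadd x (Ainj (pi (x a)))).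
Proof.
move=> neq_ab piD.
have fix_a (z : A) (v : S b) : Aadd z (Ainj v) a = z a.
  by rewrite AaddE Ainj_neq 1?eq_sym // addr0.
exists (fun z => Aadd z (Ainj (pi (z a)))); split=> //; split=> [|u v].
  exists (fun z => Aadd z (Ainj (- pi (z a)))) => z.
    by rewrite fix_a Aadd_AinjC addrN Aadd_Ainj0.
  by rewrite fix_a Aadd_AinjC addNr Aadd_Ainj0.
apply/ffunP=> j; rewrite !AaddE piD; have [<-|neq_bj] := eqVneq b j.
  by rewrite !Ainj_eq addrACA.
by rewrite !Ainj_neq // !addr0.
Qed.

Definition Amuln (x : A) (N : nat) : A := @finfun _ S (fun i => x i *+ N).

Lemma morph_Amuln (phi : A -> A) :
  {morph phi : u v / Aadd u v} -> forall x N, phi (Amuln x N) = Amuln (phi x) N.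
Proof.
move=> phiD x; elim=> [|N IH].
  have Aadd_Amuln0 (z : A) : Aadd z (Amuln z 0) = z.
    by apply/ffunP=> i; rewrite AaddE ffunE mulr0n addr0.
  apply/ffunP=> i; rewrite ffunE mulr0n; apply: (@addrI _ (phi x i)).
  by rewrite addr0 -AaddE -phiD Aadd_Amuln0.
have AmulnS (z : A) : Amuln z N.+1 = Aadd z (Amuln z N).
  by apply/ffunP=> i; rewrite AaddE !ffunE mulrS.
by rewrite !AmulnS phiD IH.
Qed.

Definition qpow_divides (x : A) (j h : nat) : Prop :=
  exists y : A, Amuln x (q ^ j) = Amuln y (q ^ h).

Lemma same_orbit_qpow_divides (x y : A) j h :
  same_orbit x y -> qpow_divides x j h -> qpow_divides y j h.
Proof.
by case=> phi [[_ phiD] <-] [z xz]; exists (phi z); rewrite -!(morph_Amuln phiD) xz.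
Qed.

End DirectSum.

Section Chains.
Variables (k : nat) (e : 'I_k -> nat).
Hypothesis e_mono : forall i j : 'I_k, (i < j)%N -> (e i < e j)%N.
Local Open Scope nat_scope.

Definition fst_lt (p r : 'I_k * nat) : bool := p.1 < r.1.

Lemma fst_lt_trans : transitive fst_lt.
Proof. by move=> y x z; apply: ltn_trans. Qed.

Lemma sorted_fst_uniq (s : seq ('I_k * nat)) : sorted fst_lt s -> uniq (map fst s).
Proof.
move=> s_sorted; apply: (@map_uniq _ _ val); rewrite -map_comp.
by apply: (sorted_uniq ltn_trans ltnn); rewrite sorted_map.
Qed.

Lemma chain_ok_behead p s : chain_ok e (p :: s) -> chain_ok e s.
Proof. by case: p s => i f [|[i2 f2] s] //= /and4P []. Qed.

Lemma chain_ok_head i f s : chain_ok e ((i, f) :: s) ->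
  all (fun p : 'I_k * nat => [&& i < p.1, f < p.2 & p.2 - f < e p.1 - e i]) s.
Proof.
elim: s i f => [|[i2 f2] s IH] i f //= /and4P [lt_i lt_f lt_d s_chain].
rewrite lt_i lt_f lt_d /=; apply: sub_all (IH _ _ s_chain) => -[i3 f3] /=.
by case/and3P=> *; apply/and3P; split; lia.
Qed.

Lemma chain_ok_sorted s : chain_ok e s -> sorted fst_lt s.
Proof.
elim: s => [|p s IH] // s_chain; have := IH (chain_ok_behead s_chain).
by case: p s s_chain {IH} => i f [|[i2 f2] s] //= /and4P [lt_i _ _ _] ->; rewrite andbT.
Qed.

Lemma in_I_behead p s : in_I e (p :: s) -> in_I e s.
Proof. by case/andP=> /andP [_ s_bnd] /chain_ok_behead s_chain; apply/andP. Qed.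

Lemma not_chain_ok_split s : sorted fst_lt s -> ~~ chain_ok e s ->
  exists s1 a fa b fb s2, s = s1 ++ (a, fa) :: (b, fb) :: s2 /\
    ~~ ((fa < fb) && (fb - fa < e b - e a)).
Proof.
elim: s => [|[i f] s IH] //; case: s IH => [|[i2 f2] s] IH //= /andP [lt_i s_sorted].
have [/andP [lt_f lt_d]|bad] := boolP ((f < f2) && (f2 - f < e i2 - e i)).
  rewrite [i < i2]lt_i lt_f lt_d /= => /(IH s_sorted) [s1 [a [fa [b [fb [s2 [-> ab]]]]]]].
  by exists ((i, f) :: s1), a, fa, b, fb, s2.
by exists [::], i, f, i2, f2, s.
Qed.

(* [chain_qdiv s j h] is the combinatorial content of "q^h divides q^j rep s"
   (see [qpow_divides_rep]): every term q^(f + j) eps_i either vanishes, when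
   f + j >= e i, or is divisible by q^h. *)
Definition chain_qdiv (s : seq ('I_k * nat)) (j h : nat) : bool :=
  all (fun p : 'I_k * nat => (p.2 + j < e p.1) ==> (h <= p.2 + j)) s.

Lemma chain_qdiv_cons0 i f s h :
  in_I e ((i, f) :: s) -> chain_qdiv ((i, f) :: s) 0 h = (h <= f).
Proof.
case/andP=> /= /andP [lt_f _] /chain_ok_head s_head.
rewrite /chain_qdiv /= addn0 lt_f /=; have [le_hf|] //= := leqP h f.
by apply/allP=> -[i2 f2] /(allP s_head) /and3P [_ ? _]; apply/implyP; lia.
Qed.

Lemma chain_qdiv_cons_jump i f s j :
  in_I e ((i, f) :: s) -> chain_qdiv ((i, f) :: s) j (j + f + 1) = (e i - f <= j).
Proof.
case/andP=> /= /andP [lt_f _] /chain_ok_head s_head; rewrite /chain_qdiv /=.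
have [le_j|lt_j] := leqP (e i - f) j; last first.
  have -> : f + j < e i by lia.
  by have -> : j + f + 1 <= f + j = false by lia.
have -> /= : f + j < e i = false by lia.
by apply/allP=> -[i2 f2] /(allP s_head) /and3P [_ ? _]; apply/implyP; lia.
Qed.

Lemma chain_qdiv_cons_late i f s j h :
  e i - f <= j -> f < e i -> chain_qdiv ((i, f) :: s) j h = chain_qdiv s j h.
Proof.
by move=> le_j lt_f; rewrite /chain_qdiv /=; have -> : f + j < e i = false by lia.
Qed.

Lemma chain_qdiv_cons_early i f s j h : in_I e ((i, f) :: s) -> j < e i - f ->
  chain_qdiv s j h = chain_qdiv ((i, f) :: s) (e i - f) (h + (e i - f - j)).
Proof.
case/andP=> /= /andP [lt_f _] /chain_ok_head s_head lt_j.
rewrite /chain_qdiv /=; have -> /= : f + (e i - f) < e i = false by lia.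
apply: eq_in_all => -[i2 f2] /(allP s_head) /= /and3P [_ ? ?].
have -> : f2 + j < e i2 by lia.
have -> : f2 + (e i - f) < e i2 by lia.
by apply/idP/idP; lia.
Qed.

(* The profile determines the sequence: with [j = 0] it reads off [f_1], with
   [h = j + f_1 + 1] it reads off [e_(i_1)] and hence [i_1], and shifting [j]
   past [e_(i_1) - f_1] strips the first term. *)
Lemma chain_qdiv_inj s t : in_I e s -> in_I e t ->
  (forall j h, chain_qdiv s j h = chain_qdiv t j h) -> s = t.
Proof.
elim: s t => [|[i f] s IH] [|[i' f'] t] //.
- by move=> _ t_I /(_ 0 f'.+1); rewrite (chain_qdiv_cons0 _ t_I) ltnn.
- by move=> s_I _ /(_ 0 f.+1); rewrite (chain_qdiv_cons0 _ s_I) ltnn.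
move=> s_I t_I qdivE.
have eq_f : f = f'.
  have := qdivE 0 f; have := qdivE 0 f'.
  by rewrite !(chain_qdiv_cons0 _ s_I) !(chain_qdiv_cons0 _ t_I) !leqnn; lia.
subst f'; have lt_f : f < e i by case/andP: s_I => /andP [].
have lt_f' : f < e i' by case/andP: t_I => /andP [].
have eq_e : e i = e i'.
  have := qdivE (e i - f) (e i - f + f + 1).
  have := qdivE (e i' - f) (e i' - f + f + 1).
  rewrite !(chain_qdiv_cons_jump _ s_I) !(chain_qdiv_cons_jump _ t_I) !leqnn.
  lia.
have eq_i : i = i'.
  by apply/val_inj; case: (ltngtP i i') => // /e_mono; rewrite eq_e ltnn.
subst i'; congr cons; apply: (IH _ (in_I_behead s_I) (in_I_behead t_I)) => j h.
have [lt_j|le_j] := ltnP j (e i - f).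
  by rewrite (chain_qdiv_cons_early _ s_I lt_j) (chain_qdiv_cons_early _ t_I lt_j).
by rewrite -(chain_qdiv_cons_late s _ le_j lt_f) -(chain_qdiv_cons_late t _ le_j lt_f).
Qed.

End Chains.

Section BigFst.
Variables (I T : eqType) (V : nmodType) (F : T -> V).

Lemma big_fst_notin (s : seq (I * T)) c :
  c \notin map fst s -> \sum_(p <- s | p.1 == c) F p.2 = 0.
Proof.
move=> c_notin; apply: big1_seq => p /andP [/eqP p_c ps].
by rewrite -p_c (map_f fst ps) in c_notin.
Qed.

Lemma big_fst_uniq (s : seq (I * T)) c f :
  uniq (map fst s) -> (c, f) \in s -> \sum_(p <- s | p.1 == c) F p.2 = F f.
Proof.
elim: s => [|[i g] s IH] //= /andP [i_notin s_uniq]; rewrite in_cons big_cons /=.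
have [<-|neq_ic] := eqVneq i c; last first.
  by case/orP=> [/eqP [eq_ic _]|]; [rewrite eq_ic eqxx in neq_ic | exact: IH].
case/orP=> [/eqP [->]|cs]; first by rewrite big_fst_notin ?addr0.
by rewrite (map_f fst cs) in i_notin.
Qed.

End BigFst.

Section Representatives.
Variables (q k : nat) (e n : 'I_k -> nat) (eps : forall i : 'I_k, summand q e n i).
Hypotheses (q_pr : prime q) (e_gt0 : forall i, (0 < e i)%N).
Hypothesis e_mono : forall i j : 'I_k, (i < j)%N -> (e i < e j)%N.
Hypothesis eps_undiv : forall i, ~ divisible_by q (eps i).
Local Notation A := (Agrp q e n).
Local Notation rep := (rep eps).

Lemma repE s c : rep s c = \sum_(p <- s | p.1 == c) eps c *+ q ^ p.2.
Proof.
elim: s => [|[i f] s IH] /=; first by rewrite AzeroE big_nil.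
rewrite AaddE IH big_cons /=; have [<-|neq_ic] := eqVneq i c.
  by rewrite Ainj_eq.
by rewrite Ainj_neq // add0r.
Qed.

(* The term (d, fd) is cancelled by the transvection adding [pi(x_c)] to the
   [d]-component, where [pi : A_c -> A_d] is a homomorphism sending
   [q^fc eps_c] to [- q^fd eps_d]; it exists when [q^(e d)] divides
   [q^(fd - fc + e c)]. *)
Lemma rep_drop_orbit s c fc d fd :
  sorted (@fst_lt k) s -> (c, fc) \in s -> (d, fd) \in s -> c != d ->
  (fc <= fd)%N -> (e d <= fd - fc + e c)%N ->
  same_orbit (rep s) (rep [seq p <- s | p.1 != d]).
Proof.
move=> s_sorted cs ds neq_cd le_f le_e; have s_uniq := sorted_fst_uniq s_sorted.
have [j eps_j] := row_Zpq_unit_coord q_pr (e_gt0 c) (@eps_undiv c).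
have [|pi [piD pi_eps]] := row_Zp_hom_to_mulrn (- eps d) (C := q ^ (fd - fc))
  (qpow_gt1 q_pr (e_gt0 c)) (qpow_gt1 q_pr (e_gt0 d)) eps_j.
  by rewrite -expnD dvdn_exp2l.
suff -> : rep [seq p <- s | p.1 != d] = Aadd (rep s) (Ainj (pi (rep s c))).
  exact: same_orbit_transvection.
apply/ffunP=> z; rewrite AaddE !repE big_filter_cond.
have [<-|neq_dz] := eqVneq d z; last first.
  rewrite Ainj_neq // addr0; apply: eq_bigl => p.
  by have [->|] := eqVneq p.1 z; rewrite ?andbF // andbT eq_sym.
rewrite Ainj_eq (big_fst_uniq (fun f => eps c *+ q ^ f) s_uniq cs).
rewrite (big_fst_uniq (fun f => eps d *+ q ^ f) s_uniq ds) (morph_mulrn piD).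
rewrite pi_eps -mulrnA -expnD subnK // mulNrn addrN.
by apply: big1 => p /andP [/negbTE ->].
Qed.

Lemma rep_orbit_drop s :
  sorted (@fst_lt k) s -> all (fun p : 'I_k * nat => (p.2 < e p.1)%N) s ->
  ~~ chain_ok e s ->
  exists2 p, p \in s & same_orbit (rep s) (rep [seq r <- s | r.1 != p.1]).
Proof.
move=> s_sorted s_bnd /(not_chain_ok_split s_sorted).
case=> s1 [a [fa [b [fb [s2 [s_def bad]]]]]].
have a_s : (a, fa) \in s by rewrite s_def mem_cat in_cons eqxx orbT.
have b_s : (b, fb) \in s by rewrite s_def mem_cat !in_cons eqxx !orbT.
have lt_ab : (a < b)%N.
  by move: s_sorted; rewrite s_def => /cat_sorted2 [_] /= /andP [lt_ab _].
have lt_e := e_mono lt_ab.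
have neq_ab : a != b by apply: contraTneq lt_ab => ->; rewrite ltnn.
have [le_f|lt_f] := leqP fb fa.
  exists (a, fa) => //; apply: (rep_drop_orbit s_sorted b_s a_s _ le_f); last lia.
  by rewrite eq_sym.
exists (b, fb) => //; apply: (rep_drop_orbit s_sorted a_s b_s neq_ab (ltnW lt_f)).
by move: bad; rewrite lt_f /=; lia.
Qed.

Lemma rep_orbit_chain s :
  sorted (@fst_lt k) s -> all (fun p : 'I_k * nat => (p.2 < e p.1)%N) s ->
  exists t, in_I e t /\ same_orbit (rep s) (rep t).
Proof.
elim: {s}_.+1 {-2}s (ltnSn (size s)) => // N IH s size_s s_sorted s_bnd.
have [s_chain|s_nchain] := boolP (chain_ok e s).
  by exists s; split; [apply/andP | apply: hom_orbit_refl].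
have [p ps s_drop] := rep_orbit_drop s_sorted s_bnd s_nchain.
have [|||t [t_I drop_t]] := IH [seq r <- s | r.1 != p.1].
- rewrite -ltnS; apply: leq_trans size_s; rewrite ltnS size_filter.
  rewrite -[X in (_ < X)%N](count_predC [pred r : 'I_k * nat | r.1 != p.1]).
  by rewrite -addn1 leq_add2l -has_count; apply/hasP; exists p => //=; rewrite negbK.
- by apply: sorted_filter s_sorted; apply: fst_lt_trans.
- by apply/allP=> r; rewrite mem_filter => /andP [_ /(allP s_bnd)].
by exists t; split=> //; apply: hom_orbit_trans s_drop drop_t.
Qed.

Lemma exists_sorted_rep_orbit (x : A) : exists2 s,
  sorted (@fst_lt k) s /\ all (fun p : 'I_k * nat => (p.2 < e p.1)%N) s &
  same_orbit x (rep s).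
Proof.
have /fin_all_exists [h hP] i : exists h, x i != 0 ->
    (h < e i)%N /\ exists2 y, ~ divisible_by q y & x i = y *+ q ^ h.
  have [xi0|/(row_Zpq_decomposition q_pr (e_gt0 i))] := eqVneq (x i) 0.
    by exists 0%N; rewrite xi0.
  by case=> h [y [? ? ?]]; exists h => _; split=> //; exists y.
pose s := [seq (i, h i) | i <- enum 'I_k & x i != 0].
have s_sorted : sorted (@fst_lt k) s.
  rewrite sorted_map; apply: sorted_filter; first exact: ltn_trans.
  by have := iota_ltn_sorted 0 k; rewrite -val_enum_ord sorted_map.
have s_uniq := sorted_fst_uniq s_sorted.
exists s.
  by split=> //; apply/allP=> p /mapP [i]; rewrite mem_filter => /andP [/hP [] ? _ _] ->.
apply: same_orbit_componentwise => i; rewrite repE.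
have [xi0|xi_neq0] := eqVneq (x i) 0.
  rewrite (big_fst_notin (fun f => eps i *+ q ^ f)) ?xi0; first exact: hom_orbit_refl.
  by rewrite -map_comp (eq_map (g := id)) // map_id mem_filter xi0 eqxx.
have i_s : (i, h i) \in s.
  by rewrite (map_f (fun i => (i, h i))) // mem_filter xi_neq0 mem_enum.
rewrite (big_fst_uniq (fun f => eps i *+ q ^ f) s_uniq i_s).
have [_ [y y_undiv ->]] := hP i xi_neq0.
have [psi [[psiB psiD] psi_y]] :=
  hom_orbit_undivisible q_pr (e_gt0 i) y_undiv (@eps_undiv i).
by exists psi; split=> //; rewrite (morph_mulrn psiD) psi_y.
Qed.

Lemma exists_rep_orbit (x : A) : exists s, in_I e s /\ same_orbit (rep s) x.
Proof.
have [s [s_sorted s_bnd] x_s] := exists_sorted_rep_orbit x.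
have [t [t_I s_t]] := rep_orbit_chain s_sorted s_bnd.
by exists t; split=> //; apply: hom_orbit_sym; apply: hom_orbit_trans x_s s_t.
Qed.

Lemma qpow_divides_rep t j h :
  in_I e t -> qpow_divides (rep t) j h <-> chain_qdiv e t j h.
Proof.
move=> t_I; have t_uniq := sorted_fst_uniq (chain_ok_sorted (proj2 (andP t_I))).
split=> [[y rep_y]|t_qdiv].
  apply/allP=> -[i f] it /=; apply/implyP => lt_fj; rewrite leqNgt; apply/negP => lt_h.
  have /(congr1 (fun z : A => z i)) := rep_y; rewrite !ffunE repE.
  rewrite (big_fst_uniq (fun f => eps i *+ q ^ f) t_uniq it) -mulrnA -expnD.
  rewrite -(subnK (ltnW lt_h)) (expnD q (h - (f + j))) mulrnA => eps_y.
  have /(row_Zpq_mulrn_eq0 q_pr (e_gt0 i) (ltnW lt_fj)) eps_div :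
      (eps i - y i *+ q ^ (h - (f + j))) *+ q ^ (f + j) = 0.
    by rewrite mulrnBl eps_y subrr.
  apply: (@eps_undiv i); rewrite -(subrK (y i *+ q ^ (h - (f + j))) (eps i)).
  apply: divisible_byD; first by apply: divisible_by_expn eps_div; rewrite subn_gt0.
  by apply: (@divisible_by_expn _ _ (h - (f + j))); [rewrite subn_gt0 | exists (y i)].
exists (@finfun _ (summand q e n)
  (fun i => \sum_(p <- t | p.1 == i) eps i *+ q ^ (p.2 + j - h))).
apply/ffunP=> i; rewrite !ffunE repE -!sumrMnl.
rewrite big_seq_cond [RHS]big_seq_cond; apply: eq_bigr => -[i' f] /andP [it /eqP /= eq_i].
subst i'; rewrite -!mulrnA -!expnD; have /= /implyP qdiv_f := allP t_qdiv _ it.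
have [/qdiv_f le_h|le_e] := ltnP (f + j) (e i); first by rewrite subnK.
rewrite !(row_Zp_mulrn_dvd (qpow_gt1 q_pr (e_gt0 i))) // dvdn_exp2l //; lia.
Qed.

Lemma rep_orbit_inj s t :
  in_I e s -> in_I e t -> same_orbit (rep s) (rep t) -> s = t.
Proof.
move=> s_I t_I s_t; apply: (chain_qdiv_inj e_mono s_I t_I) => j h.
apply/idP/idP => [/(qpow_divides_rep _ _ s_I) | /(qpow_divides_rep _ _ t_I)].
  by move/(same_orbit_qpow_divides s_t)/(qpow_divides_rep _ _ t_I).
by move/(same_orbit_qpow_divides (hom_orbit_sym s_t))/(qpow_divides_rep _ _ s_I).
Qed.

End Representatives.

Theorem theorem2p1 (q k : nat) (e n : 'I_k -> nat)
  (eps : forall i : 'I_k, summand q e n i) :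
  prime q ->
  (forall i : 'I_k, (1 <= e i)%N) ->
  (forall i j : 'I_k, (i < j)%N -> (e i < e j)%N) ->
  (forall i : 'I_k, (0 < n i)%N) ->
  (forall i : 'I_k, ~ exists y : summand q e n i, eps i = (y *+ q)%R) ->
  (forall x : Agrp q e n,
      exists s : seq ('I_k * nat), in_I e s /\ same_orbit (rep eps s) x) /\
  (forall s t : seq ('I_k * nat), in_I e s -> in_I e t ->
      same_orbit (rep eps s) (rep eps t) -> s = t).
Proof.
move=> q_pr e_gt0 e_mono _ eps_undiv.
by split; [exact: exists_rep_orbit | exact: rep_orbit_inj].
Qed.
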